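(* Fix any total budget $\mathrm{TB}\in\mathbb N_0$. For every $k\in\mathbb N$, $-1/2^k<*<1/2^k$, where $*=\{0\mid 0\}$.
   Context: Game forms are defined recursively: $G=\{G^{\mathcal L}\mid G^{\mathcal R}\}$ with finite sets of Left and Right options, and finite birthday. $0=\{\varnothing\mid\varnothing\}$, $1=\{0\mid\varnothing\}$, $*=\{0\mid 0\}$. Dyadic game forms: $1/2^0=1$ and for $k\in\mathbb N$, $1/2^k=\{0\mid 1/2^{k-1}\}$; $-1/2^k=\overline{1/2^k}$, where the conjugate is $\bar G=\{\overline{G^{\mathcal R}}\mid\overline{G^{\mathcal L}}\}$. The budget set for total budget $\mathrm{TB}$ is $\mathcal B=\{0,\dots,\mathrm{TB},\hat 0,\dots,\widehat{\mathrm{TB}}\}$: state $p$ (resp. $\hat p$) means Left holds $p$ dollars and Right holds $\mathrm{TB}-p$, and Right (resp. Left) holds the tie-breaking marker. Play of $(G,\tilde p)$: at every position (terminal ones included) both players bid simultaneously, Left $\ell\in\{0,\dots,p\}$, Right $r\in\{0,\dots,\mathrm{TB}-p\}$. If Left holds the marker (state $\hat p$): if $\ell>r$ Left moves to $(G^L,\widehat{p-\ell})$, or, including the marker (allowed when $\ell\ge r$), to $(G^L,p-\ell)$; if $\ell=r$ Left wins, the marker passes to Right, play continues at $(G^L,p-\ell)$; if $\ell<r$ Right moves to $(G^R,\widehat{p+r})$. Symmetrically when Right holds the marker (state $p$): if $r>\ell$ Right moves to $(G^R,p+r)$ or, including the marker, to $(G^R,\widehat{p+r})$; if $r=\ell$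 Right wins, the marker passes to Left, play continues at $(G^R,\widehat{p+r})$; if $r<\ell$ Left moves to $(G^L,p-\ell)$. A player who wins a bid but has no option loses. $o(G,\tilde p)\in\{\mathrm L,\mathrm R\}$ is the winner under optimal play; $\mathrm L>\mathrm R$. Disjunctive sum $G+H=\{G^{\mathcal L}+H,G+H^{\mathcal L}\mid G^{\mathcal R}+H,G+H^{\mathcal R}\}$. $G\ge H$ means $o(G+X,\tilde p)\ge o(H+X,\tilde p)$ for all game forms $X$ and all $\tilde p\in\mathcal B$; $G>H$ means $G\ge H$ and not $H\ge G$; $G<H$ means $H>G$. *)

From Stdlib Require Import List Arith.
Import ListNotations.

Inductive game : Type := Gm : list game -> list game -> game.

Definition zero : game := Gm [] [].
Definition one : game := Gm [zero] [].
Definition star : game := Gm [zero] [zero].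

Fixpoint conj (g : game) : game :=
  match g with Gm gl gr => Gm (map conj gr) (map conj gl) end.

(* dyadic 1/2^k *)
Fixpoint dyadic (k : nat) : game :=
  match k with 0 => one | S k' => Gm [zero] [dyadic k'] end.

Definition neg_dyadic (k : nat) : game := conj (dyadic k).

Fixpoint add (g h : game) {struct g} : game :=
  match g with
  | Gm gl gr =>
    (fix addg (h : game) : game :=
       match h with
       | Gm hl hr =>
         Gm (map (fun x => add x h) gl ++ map addg hl)
            (map (fun x => add x h) gr ++ map addg hr)
       end) h
  end.

(* Budget state (p, m) with total budget TB: Left holds p dollars, Right
   holds TB - p; m = true means Left holds the tie-breaking marker (state
   \hat p), m = false means Right holds it (state p). *)
Fixpoint LeftWins (TB : nat) (g : game) (p : nat) (m : bool) {struct g} : Prop :=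
  match g with
  | Gm gl gr =>
    let exL := fun q mk =>
      (fix ex (l : list game) : Prop :=
         match l with [] => False | h :: t => LeftWins TB h q mk \/ ex t end) gl in
    let allR := fun q mk =>
      (fix al (l : list game) : Prop :=
         match l with [] => True | h :: t => LeftWins TB h q mk /\ al t end) gr in
    exists l, l <= p /\
      forall r, r <= TB - p ->
        if m then
          (r < l -> exL (p - l) true \/ exL (p - l) false) /\
          (l = r -> exL (p - l) false) /\
          (l < r -> allR (p + r) true)
        else
          (r < l -> exL (p - l) false) /\
          (l = r -> allR (p + r) true) /\
          (l < r -> allR (p + r) false /\ allR (p + r) true)
  end.

Definition outcomeL (TB : nat) (g : game) (p : nat) (m : bool) : Prop :=
  LeftWins TB g p m.

(* G >= H : o(G+X, p~) >= o(H+X, p~) for all X and all p~ in the budget set;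
   since L > R this means o(H+X,p~) = L implies o(G+X,p~) = L. *)
Definition game_ge (TB : nat) (g h : game) : Prop :=
  forall (x : game) (p : nat) (m : bool), p <= TB ->
    outcomeL TB (add h x) p m -> outcomeL TB (add g x) p m.

Definition game_gt (TB : nat) (g h : game) : Prop :=
  game_ge TB g h /\ ~ game_ge TB h g.

From Stdlib Require Import List Arith Lia Classical.
Import ListNotations.

(* Write [G <= H] when, for every game [X] and every budget state, Left winning
   [G + X] implies Left winning [H + X].  Holding the marker can hurt Left
   (winning a bid with no move available loses), so the induction also tracks a
   marker-sensitive relation: Left winning [G + X] while Right holds the marker
   implies Left winning [H + X] while Left holds it.  Both relations against 0
   pass from the Left options of [G] to [G] as soon as 0 is a Right option of
   [G] (Right answers a Left bid of 0 by taking the tie and moving to 0), which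
   gives [-1/2^k <= 0] by induction on [k]; dually [0 <= 1/2^k].  Comparing
   options then gives [-1/2^k <= * <= 1/2^k].  Strictness is witnessed in the
   context [X = 0]: Left never wins [-1/2^k] but wins [*] with the whole budget
   and the marker; Left always wins [1/2^k] but loses [*] with no money and
   without the marker. *)

Fixpoint game_ind_In (P : game -> Prop)
  (H : forall gl gr, (forall g, In g gl -> P g) -> (forall g, In g gr -> P g) -> P (Gm gl gr))
  (g : game) : P g :=
  match g with
  | Gm gl gr =>
    let all_P := fix all_P (l : list game) : forall h, In h l -> P h :=
      match l with
      | [] => fun h (Hh : In h []) => match Hh with end
      | x :: t => fun h (Hh : In h (x :: t)) =>
          match Hh with
          | or_introl e => eq_ind x P (game_ind_In P H x) h e
          | or_intror Ht => all_P t h Ht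
          end
      end in
    H gl gr (all_P gl) (all_P gr)
  end.

Lemma add_Gm gl gr xl xr :
  add (Gm gl gr) (Gm xl xr) =
  Gm (map (fun g => add g (Gm xl xr)) gl ++ map (add (Gm gl gr)) xl)
     (map (fun g => add g (Gm xl xr)) gr ++ map (add (Gm gl gr)) xr).
Proof. reflexivity. Qed.

Lemma add_zero_l x : add zero x = x.
Proof.
  induction x as [xl xr IHl IHr] using game_ind_In. unfold zero. rewrite add_Gm. simpl.
  f_equal; [induction xl as [|x xl IH] | induction xr as [|x xr IH]]; simpl; f_equal;
    auto using in_eq, in_cons.
Qed.

Lemma add_zero_r x : add x zero = x.
Proof.
  induction x as [xl xr IHl IHr] using game_ind_In. unfold zero. rewrite add_Gm, !app_nil_r.
  f_equal; [induction xl as [|x xl IH] | induction xr as [|x xr IH]]; simpl; f_equal;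
    auto using in_eq, in_cons.
Qed.

Section Bidding.

Variable TB : nat.

Definition some_wins (gs : list game) (q : nat) (mk : bool) : Prop :=
  exists g, In g gs /\ LeftWins TB g q mk.

Definition all_win (gs : list game) (q : nat) (mk : bool) : Prop :=
  forall g, In g gs -> LeftWins TB g q mk.

Definition bid_wins (E A : nat -> bool -> Prop) (p : nat) (m : bool) (l : nat) : Prop :=
  forall r, r <= TB - p ->
    if m then
      (r < l -> E (p - l) true \/ E (p - l) false) /\
      (l = r -> E (p - l) false) /\
      (l < r -> A (p + r) true)
    else
      (r < l -> E (p - l) false) /\
      (l = r -> A (p + r) true) /\
      (l < r -> A (p + r) false /\ A (p + r) true).

Lemma bid_wins_mono (E E' A A' : nat -> bool -> Prop) p m l :
  (forall q mk, E q mk -> E' q mk) -> (forall q mk, A q mk -> A' q mk) ->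
  bid_wins E A p m l -> bid_wins E' A' p m l.
Proof.
  intros HE HA H r Hr. specialize (H r Hr).
  destruct m; destruct H as [H1 [H2 H3]]; split; [|split| |split]; intros Hb;
    try destruct (H1 Hb); try destruct (H3 Hb); try split; auto.
Qed.

Lemma some_wins_fix q mk gs :
  (fix ex (l : list game) : Prop :=
     match l with [] => False | h :: t => LeftWins TB h q mk \/ ex t end) gs
  <-> some_wins gs q mk.
Proof.
  unfold some_wins. induction gs as [|g gs IH]; simpl.
  - firstorder.
  - rewrite IH. firstorder congruence.
Qed.

Lemma all_win_fix q mk gs :
  (fix al (l : list game) : Prop :=
     match l with [] => True | h :: t => LeftWins TB h q mk /\ al t end) gs
  <-> all_win gs q mk.
Proof.
  unfold all_win. induction gs as [|g gs IH]; simpl.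
  - firstorder.
  - rewrite IH. firstorder congruence.
Qed.

Lemma LeftWins_Gm gl gr p m :
  LeftWins TB (Gm gl gr) p m <->
  exists l, l <= p /\ bid_wins (some_wins gl) (all_win gr) p m l.
Proof.
  simpl. split; intros [l [Hl H]]; exists l; split; auto; intros r Hr;
    specialize (H r Hr); destruct m; rewrite ?some_wins_fix, ?all_win_fix in *; exact H.
Qed.

Lemma some_wins_app_map (f g : game -> game) gl xl q mk :
  some_wins (map f gl ++ map g xl) q mk <->
  (exists a, In a gl /\ LeftWins TB (f a) q mk) \/ (exists x, In x xl /\ LeftWins TB (g x) q mk).
Proof.
  unfold some_wins. setoid_rewrite in_app_iff. setoid_rewrite in_map_iff. firstorder congruence.
Qed.

Lemma all_win_app_map (f g : game -> game) gl xl q mk :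
  all_win (map f gl ++ map g xl) q mk <->
  (forall a, In a gl -> LeftWins TB (f a) q mk) /\ (forall x, In x xl -> LeftWins TB (g x) q mk).
Proof.
  unfold all_win. setoid_rewrite in_app_iff. setoid_rewrite in_map_iff. firstorder congruence.
Qed.

Lemma LeftWins_add gl gr xl xr p m :
  LeftWins TB (add (Gm gl gr) (Gm xl xr)) p m <->
  exists l, l <= p /\ bid_wins
    (fun q mk => (exists g, In g gl /\ LeftWins TB (add g (Gm xl xr)) q mk) \/
                 (exists x, In x xl /\ LeftWins TB (add (Gm gl gr) x) q mk))
    (fun q mk => (forall g, In g gr -> LeftWins TB (add g (Gm xl xr)) q mk) /\
                 (forall x, In x xr -> LeftWins TB (add (Gm gl gr) x) q mk)) p m l.
Proof.
  rewrite add_Gm, LeftWins_Gm.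
  split; intros [l [Hl H]]; exists l; split; auto; revert H; apply bid_wins_mono;
    intros q mk; rewrite ?some_wins_app_map, ?all_win_app_map; auto.
Qed.

Lemma LeftWins_budget_mono x p p' m : p <= p' -> LeftWins TB x p m -> LeftWins TB x p' m.
Proof.
  intros Hp. revert p p' m Hp. induction x as [gl gr IHl IHr] using game_ind_In.
  intros p p' m Hp. rewrite !LeftWins_Gm. intros [l [Hl H]].
  exists l; split; [lia|]. intros r Hr.
  assert (Hl_mono : forall mk, some_wins gl (p - l) mk -> some_wins gl (p' - l) mk).
  { intros mk [g [Hg W]]. exists g; split; [exact Hg|]. apply (IHl g Hg (p - l)); [lia | exact W]. }
  assert (Hr_mono : forall r mk, all_win gr (p + r) mk -> all_win gr (p' + r) mk).
  { intros r' mk W g Hg. apply (IHr g Hg (p + r')); [lia | exact (W g Hg)]. }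
  specialize (H r ltac:(lia)).
  destruct m; destruct H as [H1 [H2 H3]]; split; [|split| |split]; intros Hb;
    try destruct (H1 Hb); try destruct (H3 Hb); try split; auto.
Qed.

Lemma LeftWins_zero_no_marker q : LeftWins TB zero q false.
Proof.
  unfold zero. rewrite LeftWins_Gm. exists 0; split; [lia|].
  intros r _. repeat split; intros; try lia; intros g [].
Qed.

Lemma not_LeftWins_zero_marker q : ~ LeftWins TB zero q true.
Proof.
  unfold zero. rewrite LeftWins_Gm. intros [l [_ H]].
  destruct (H 0 (Nat.le_0_l _)) as [H1 [H2 _]]. destruct l as [|l].
  - destruct (H2 eq_refl) as [g [[] _]].
  - destruct (H1 ltac:(lia)) as [[g [[] _]] | [g [[] _]]].
Qed.

Definition outcome_le (g h : game) : Prop :=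
  forall x p m, LeftWins TB (add g x) p m -> LeftWins TB (add h x) p m.

Definition marker_le (g h : game) : Prop :=
  forall x q, LeftWins TB (add g x) q false -> LeftWins TB (add h x) q true.

Lemma outcome_le_refl g : outcome_le g g.
Proof. intros x p m W. exact W. Qed.

Lemma outcome_le_options gl gr hl hr :
  (forall g, In g gl -> exists h, In h hl /\ outcome_le g h) ->
  (forall h, In h hr -> exists g, In g gr /\ outcome_le g h) ->
  outcome_le (Gm gl gr) (Gm hl hr).
Proof.
  intros Hl Hr x. induction x as [xl xr IHl IHr] using game_ind_In.
  intros p m. rewrite !LeftWins_add. intros [l [Hlp H]].
  exists l; split; [exact Hlp|]. revert H. apply bid_wins_mono; intros q mk.
  - intros [[g [Hg W]] | [x [Hx W]]].
    + destruct (Hl g Hg) as [h [Hh Hgh]]. left. exists h. auto.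
    + right. exists x. auto.
  - intros [Wr Wx]. split; [|auto].
    intros h Hh. destruct (Hr h Hh) as [g [Hg Hgh]]. auto.
Qed.

Section LeZero.

Variables gl gr : list game.

Hypothesis left_options_le : forall g, In g gl -> outcome_le g zero /\ marker_le g zero.

(* If Left's winning bid in [G + X] leads her into [g + X] for a Left option
   [g], then [X] was already won at the budget she started from. *)
Lemma outcome_le_zero_of_left_options : outcome_le (Gm gl gr) zero.
Proof.
  intros x. rewrite add_zero_l. induction x as [xl xr IHl IHr] using game_ind_In.
  intros p m H. rewrite LeftWins_add in H. destruct H as [l [Hl H]].
  set (X := Gm xl xr) in *.
  destruct (classic (LeftWins TB X p m)) as [|Hlose]; [assumption|].
  assert (Hgl : forall g q mk, In g gl -> q <= p -> LeftWins TB (add g X) q mk ->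
                  LeftWins TB X p true /\ (mk = false -> LeftWins TB X p false)).
  { intros g q mk Hg Hq W. destruct (left_options_le g Hg) as [Hout Hmark].
    split; [destruct mk | intros ->];
      [apply Hout in W | apply Hmark in W | apply Hout in W];
      rewrite add_zero_l in W; exact (LeftWins_budget_mono _ _ _ _ Hq W). }
  assert (Hxr : forall y, In y xr -> forall q mk,
                  LeftWins TB (add (Gm gl gr) y) q mk -> LeftWins TB y q mk) by auto.
  unfold X. rewrite LeftWins_Gm. exists l; split; [exact Hl|].
  intros r Hr. specialize (H r Hr).
  destruct m; destruct H as [H1 [H2 H3]]; split; [|split| |split]; intros Hb.
  - destruct (H1 Hb) as [[[g [Hg W]] | [y [Hy W]]] | [[g [Hg W]] | [y [Hy W]]]];
      [| left | | right]; try (exists y; auto);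
      exfalso; apply Hlose, (Hgl g (p - l) _ Hg ltac:(lia) W).
  - destruct (H2 Hb) as [[g [Hg W]] | [y [Hy W]]]; [| exists y; auto].
    exfalso; apply Hlose, (Hgl g (p - l) _ Hg ltac:(lia) W).
  - intros y Hy. apply (Hxr y Hy), (H3 Hb), Hy.
  - destruct (H1 Hb) as [[g [Hg W]] | [y [Hy W]]]; [| exists y; auto].
    exfalso; apply Hlose, (Hgl g (p - l) _ Hg ltac:(lia) W); reflexivity.
  - intros y Hy. apply (Hxr y Hy), (H2 Hb), Hy.
  - destruct (H3 Hb) as [[_ Wf] [_ Wt]]. split; intros y Hy; apply (Hxr y Hy); auto.
Qed.

Hypothesis zero_right_option : In zero gr.

(* A winning Left bid [l] in [G + X] with Right holding the marker becomes the
   bid [l - 1] in [X] with Left holding it: Right's bid [l] now loses the tie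
   instead of winning it.  A winning Left bid of [0] in [G + X] already wins [X]
   for Left with the marker, since Right may take the tie and move to [0 + X]. *)
Lemma marker_le_zero_of_left_options : marker_le (Gm gl gr) zero.
Proof.
  intros [xl xr] q H. rewrite add_zero_l. rewrite LeftWins_add in H.
  destruct H as [l [Hl H]]. set (X := Gm xl xr) in *.
  assert (Hx : forall y p mk, LeftWins TB (add (Gm gl gr) y) p mk -> LeftWins TB y p mk).
  { intros y p mk W. apply outcome_le_zero_of_left_options in W.
    rewrite add_zero_l in W. exact W. }
  destruct l as [|l].
  - destruct (H 0 (Nat.le_0_l _)) as [_ [H2 _]].
    destruct (H2 eq_refl) as [Wz _]. specialize (Wz zero zero_right_option).
    rewrite add_zero_l, Nat.add_0_r in Wz. exact Wz.
  - destruct (classic (LeftWins TB X q true)) as [|Hlose]; [assumption|].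
    unfold X. rewrite LeftWins_Gm. exists l; split; [lia|]. intros r Hr.
    assert (Hmove : (exists g, In g gl /\ LeftWins TB (add g X) (q - S l) false) \/
                    (exists y, In y xl /\ LeftWins TB (add (Gm gl gr) y) (q - S l) false) ->
                    some_wins xl (q - l) false).
    { intros [[g [Hg W]] | [y [Hy W]]].
      - exfalso. apply Hlose. apply (proj2 (left_options_le g Hg)) in W.
        rewrite add_zero_l in W. exact (LeftWins_budget_mono _ (q - S l) q _ ltac:(lia) W).
      - exists y. split; [exact Hy|].
        exact (LeftWins_budget_mono _ (q - S l) (q - l) _ ltac:(lia) (Hx y _ _ W)). }
    split; [|split].
    + intros Hb. right. apply Hmove. apply (H r Hr). lia.
    + intros Hb. apply Hmove. apply (H r Hr). lia.
    + intros Hb y Hy. apply Hx. destruct (Nat.eq_dec r (S l)) as [-> | Hne].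
      * destruct (H (S l) Hr) as [_ [H2 _]]. apply (H2 eq_refl), Hy.
      * destruct (H r Hr) as [_ [_ H3]]. apply (H3 ltac:(lia)), Hy.
Qed.

End LeZero.

Section GeZero.

Variables gl gr : list game.

Hypothesis right_options_ge : forall g, In g gr -> outcome_le zero g /\ marker_le zero g.

Lemma outcome_le_zero_of_right_options : outcome_le zero (Gm gl gr).
Proof.
  intros x. rewrite add_zero_l. induction x as [xl xr IHl IHr] using game_ind_In.
  intros p m W. pose proof W as H. rewrite LeftWins_Gm in H. destruct H as [l [Hl H]].
  set (X := Gm xl xr) in *.
  assert (Hgr : forall g q, In g gr -> p <= q ->
                  LeftWins TB (add g X) q true /\ (m = false -> LeftWins TB (add g X) q false)).
  { intros g q Hg Hq. destruct (right_options_ge g Hg) as [Hout Hmark].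
    pose proof (LeftWins_budget_mono _ _ _ _ Hq W) as WX. rewrite <- (add_zero_l X) in WX.
    split; [destruct m | intros ->]; [apply Hout | apply Hmark | apply Hout]; exact WX. }
  unfold X. rewrite LeftWins_add. exists l; split; [exact Hl|].
  intros r Hr. specialize (H r Hr).
  destruct m; destruct H as [H1 [H2 H3]]; split; [|split| |split]; intros Hb.
  - destruct (H1 Hb) as [[y [Hy Wy]] | [y [Hy Wy]]]; [left | right]; right; eauto.
  - destruct (H2 Hb) as [y [Hy Wy]]. right. eauto.
  - split; [intros g Hg; apply Hgr; [exact Hg | lia] | intros y Hy; apply IHr, H3; auto].
  - destruct (H1 Hb) as [y [Hy Wy]]. right. eauto.
  - split; [intros g Hg; apply Hgr; [exact Hg | lia] | intros y Hy; apply IHr, H2; auto].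
  - destruct (H3 Hb) as [Wf Wt].
    split; split; intros y Hy; try (apply IHr; auto);
      apply (Hgr y (p + r) Hy ltac:(lia)); reflexivity.
Qed.

Hypothesis zero_left_option : In zero gl.

(* Dually to [marker_le_zero_of_left_options], a winning Left bid [l > 0] in [X]
   stays winning in [G + X] once Left holds the marker, and a winning bid [0]
   in [X] becomes the bid [0] in [G + X], whose ties Left now wins by moving to
   [0 + X] and handing the marker back to Right. *)
Lemma marker_le_zero_of_right_options : marker_le zero (Gm gl gr).
Proof.
  intros [xl xr] q W. rewrite add_zero_l in W. pose proof W as H.
  rewrite LeftWins_Gm in H. destruct H as [l [Hl H]]. set (X := Gm xl xr) in *.
  assert (Hx : forall y p mk, LeftWins TB y p mk -> LeftWins TB (add (Gm gl gr) y) p mk).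
  { intros y p mk Wy. rewrite <- (add_zero_l y) in Wy.
    exact (outcome_le_zero_of_right_options y p mk Wy). }
  assert (Hgr : forall g r, In g gr -> LeftWins TB (add g X) (q + r) true).
  { intros g r Hg. apply (proj2 (right_options_ge g Hg)). rewrite add_zero_l.
    exact (LeftWins_budget_mono _ q (q + r) _ ltac:(lia) W). }
  unfold X. rewrite LeftWins_add. exists l; split; [exact Hl|]. intros r Hr.
  split; [|split]; intros Hb.
  - right. right. destruct (H r Hr) as [H1 _]. destruct (H1 Hb) as [y [Hy Wy]]. eauto.
  - destruct l as [|l].
    + left. exists zero. split; [exact zero_left_option|].
      rewrite add_zero_l, Nat.sub_0_r. exact W.
    + right. destruct (H 0 (Nat.le_0_l _)) as [H1 _].
      destruct (H1 ltac:(lia)) as [y [Hy Wy]]. eauto.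
  - split; [intros g Hg; exact (Hgr g r Hg)|].
    intros y Hy. apply Hx. destruct (H r Hr) as [_ [_ H3]]. apply (H3 Hb), Hy.
Qed.

End GeZero.

Lemma neg_dyadic_le_zero j : outcome_le (neg_dyadic j) zero /\ marker_le (neg_dyadic j) zero.
Proof.
  assert (Hstep : forall gl, (forall g, In g gl -> outcome_le g zero /\ marker_le g zero) ->
            outcome_le (Gm gl [zero]) zero /\ marker_le (Gm gl [zero]) zero).
  { intros gl Hgl. split;
      [apply outcome_le_zero_of_left_options | apply marker_le_zero_of_left_options];
      auto using in_eq. }
  induction j as [|j IHj].
  - change (neg_dyadic 0) with (Gm [] [zero]). apply Hstep. intros g [].
  - change (neg_dyadic (S j)) with (Gm [neg_dyadic j] [zero]). apply Hstep.
    intros g [<- | []]. exact IHj.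
Qed.

Lemma dyadic_ge_zero j : outcome_le zero (dyadic j) /\ marker_le zero (dyadic j).
Proof.
  assert (Hstep : forall gr, (forall g, In g gr -> outcome_le zero g /\ marker_le zero g) ->
            outcome_le zero (Gm [zero] gr) /\ marker_le zero (Gm [zero] gr)).
  { intros gr Hgr. split;
      [apply outcome_le_zero_of_right_options | apply marker_le_zero_of_right_options];
      auto using in_eq. }
  induction j as [|j IHj].
  - apply Hstep. intros g [].
  - apply Hstep. intros g [<- | []]. exact IHj.
Qed.

Lemma neg_dyadic_le_star j : outcome_le (neg_dyadic (S j)) star.
Proof.
  change (neg_dyadic (S j)) with (Gm [neg_dyadic j] [zero]). apply outcome_le_options.
  - intros g [<- | []]. exists zero. split; [now left | apply neg_dyadic_le_zero].
  - intros h [<- | []]. exists zero. split; [now left | apply outcome_le_refl].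
Qed.

Lemma star_le_dyadic j : outcome_le star (dyadic (S j)).
Proof.
  apply outcome_le_options.
  - intros g [<- | []]. exists zero. split; [now left | apply outcome_le_refl].
  - intros h [<- | []]. exists zero. split; [now left | apply dyadic_ge_zero].
Qed.

Lemma not_LeftWins_of_left_options gl gr :
  In zero gr -> (forall g, In g gl -> forall q mk, ~ LeftWins TB g q mk) ->
  forall p m, ~ LeftWins TB (Gm gl gr) p m.
Proof.
  intros Hz Hgl p m. rewrite LeftWins_Gm. intros [l [_ H]]. specialize (H 0 (Nat.le_0_l _)).
  assert (Hno : forall q mk, ~ some_wins gl q mk)
    by (intros q mk [g [Hg W]]; exact (Hgl g Hg q mk W)).
  destruct m, l as [|l]; destruct H as [H1 [H2 _]].
  - exact (Hno _ _ (H2 eq_refl)).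
  - destruct (H1 ltac:(lia)); eapply Hno; eassumption.
  - exact (not_LeftWins_zero_marker _ (H2 eq_refl zero Hz)).
  - exact (Hno _ _ (H1 ltac:(lia))).
Qed.

Lemma LeftWins_of_right_options gl gr :
  In zero gl -> (forall g, In g gr -> forall q mk, LeftWins TB g q mk) ->
  forall p m, LeftWins TB (Gm gl gr) p m.
Proof.
  intros Hz Hgr p m. rewrite LeftWins_Gm. exists 0; split; [lia|]. intros r _.
  assert (Hall : forall q mk, all_win gr q mk) by (intros q mk g Hg; apply Hgr, Hg).
  destruct m; split; [|split| |split]; intros Hb; try lia; try split; auto.
  exists zero. split; [exact Hz | apply LeftWins_zero_no_marker].
Qed.

Lemma neg_dyadic_loses j p m : ~ LeftWins TB (neg_dyadic j) p m.
Proof.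
  revert p m. induction j as [|j IHj].
  - change (neg_dyadic 0) with (Gm [] [zero]).
    apply not_LeftWins_of_left_options; [now left | intros g []].
  - change (neg_dyadic (S j)) with (Gm [neg_dyadic j] [zero]).
    apply not_LeftWins_of_left_options; [now left | intros g [<- | []]; exact IHj].
Qed.

Lemma dyadic_wins j p m : LeftWins TB (dyadic j) p m.
Proof.
  revert p m. induction j as [|j IHj].
  - apply LeftWins_of_right_options; [now left | intros g []].
  - apply LeftWins_of_right_options; [now left | intros g [<- | []]; exact IHj].
Qed.

Lemma LeftWins_star_full_budget : LeftWins TB star TB true.
Proof.
  unfold star. rewrite LeftWins_Gm. exists 0; split; [lia|]. intros r Hr.
  split; [|split]; intros Hb; try lia.
  exists zero. split; [now left | apply LeftWins_zero_no_marker].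
Qed.

Lemma not_LeftWins_star_broke : ~ LeftWins TB star 0 false.
Proof.
  unfold star. rewrite LeftWins_Gm. intros [l [Hl H]]. assert (l = 0) as -> by lia.
  destruct (H 0 (Nat.le_0_l _)) as [_ [H2 _]].
  exact (not_LeftWins_zero_marker _ (H2 eq_refl zero (in_eq _ _))).
Qed.

Lemma game_ge_of_outcome_le g h : outcome_le h g -> game_ge TB g h.
Proof. intros Hle x p m _. apply Hle. Qed.

Lemma not_game_ge_of_outcomes g h p m :
  p <= TB -> LeftWins TB h p m -> ~ LeftWins TB g p m -> ~ game_ge TB g h.
Proof.
  intros Hp Wh Lg Hge. apply Lg. specialize (Hge zero p m Hp). unfold outcomeL in Hge.
  rewrite !add_zero_r in Hge. exact (Hge Wh).
Qed.

End Bidding.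

Theorem mainTheorem20 : forall (TB k : nat), 1 <= k ->
  game_gt TB star (neg_dyadic k) /\ game_gt TB (dyadic k) star.
Proof.
  intros TB k Hk. destruct k as [|j]; [lia|]. split; split.
  - apply game_ge_of_outcome_le, neg_dyadic_le_star.
  - apply (not_game_ge_of_outcomes TB _ _ TB true (le_n TB)).
    + apply LeftWins_star_full_budget.
    + apply neg_dyadic_loses.
  - apply game_ge_of_outcome_le, star_le_dyadic.
  - apply (not_game_ge_of_outcomes TB _ _ 0 false (Nat.le_0_l TB)).
    + apply dyadic_wins.
    + apply not_LeftWins_star_broke.
Qed.
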